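(* If there exists a non-principal nowhere dense ultrafilter on $\omega$, then there exists a $\sigma$-centered forcing notion $\mathbb{P}$ such that above every element of $\mathbb{P}$ there are two incompatible elements and $\mathbb{P}$ does not add a Cohen real.
   Context: Forcing order convention: $p\leqslant q$ means $q$ is stronger than $p$. $\mathbb{P}$ is $\sigma$-centered if $\mathbb{P}=\bigcup_{n<\omega}A_n$ with each $A_n$ directed (any two elements of $A_n$ have a common upper bound in $A_n$). $\mathbb{P}$ adds a Cohen real if there is a $\mathbb{P}$-name $\underline{r}$ for an element of ${}^\omega 2$ such that for every ground-model open dense $\mathcal{D}\subseteq{}^\omega 2$, $\Vdash_{\mathbb{P}}\underline{r}\in\mathcal{D}^*$, $\mathcal{D}^*$ being the reinterpretation of $\mathcal{D}$ in the extension. A filter $D$ on $\omega$ is nowhere dense if for every $f\colon\omega\to{}^\omega 2$ there is $A\in D$ with $f(A)$ nowhere dense in ${}^\omega 2$. *)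

From Stdlib Require Import Arith.

(* Cantor space 2^omega = nat -> bool. [agree x y n]: x and y agree below n,
   i.e. y lies in the basic clopen set [x|n]. *)
Definition agree (x y : nat -> bool) (n : nat) : Prop :=
  forall k, k < n -> x k = y k.

Definition nowhere_dense (S : (nat -> bool) -> Prop) : Prop :=
  forall (x : nat -> bool) (n : nat),
    exists (y : nat -> bool) (m : nat),
      n <= m /\ agree x y n /\ (forall z, agree y z m -> ~ S z).

Definition is_open (D : (nat -> bool) -> Prop) : Prop :=
  forall x, D x -> exists n, forall y, agree x y n -> D y.

Definition is_dense (D : (nat -> bool) -> Prop) : Prop :=
  forall (x : nat -> bool) (n : nat), exists y, agree x y n /\ D y.

Definition ultrafilter (U : (nat -> Prop) -> Prop) : Prop :=
  U (fun _ => True) /\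
  ~ U (fun _ => False) /\
  (forall A B : nat -> Prop, U A -> (forall n, A n -> B n) -> U B) /\
  (forall A B : nat -> Prop, U A -> U B -> U (fun n => A n /\ B n)) /\
  (forall A : nat -> Prop, U A \/ U (fun n => ~ A n)).

Definition nonprincipal (U : (nat -> Prop) -> Prop) : Prop :=
  forall m : nat, ~ U (fun n => n = m).

Definition nowhere_dense_filter (U : (nat -> Prop) -> Prop) : Prop :=
  forall f : nat -> (nat -> bool),
    exists A : nat -> Prop, U A /\
      nowhere_dense (fun z => exists n, A n /\ f n = z).

(* Forcing notions: a preorder [le]; [le p q] means q is stronger than p. *)
Definition preorder {P : Type} (le : P -> P -> Prop) : Prop :=
  (forall p, le p p) /\ (forall p q r, le p q -> le q r -> le p r).

Definition compatible {P : Type} (le : P -> P -> Prop) (p q : P) : Prop :=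
  exists r, le p r /\ le q r.

Definition splitting {P : Type} (le : P -> P -> Prop) : Prop :=
  forall p, exists q r, le p q /\ le p r /\ ~ compatible le q r.

Definition sigma_centered {P : Type} (le : P -> P -> Prop) : Prop :=
  exists C : nat -> P -> Prop,
    (forall p, exists n, C n p) /\
    (forall n p q, C n p -> C n q -> exists r, C n r /\ le p r /\ le q r).

(* A P-name for an element of 2^omega, represented by the sets
   [A n i] = {p | p forces r(n) = i}: these are open (closed upward under
   strengthening), [A n true] and [A n false] are disjoint, and their union
   is dense. *)
Definition real_name {P : Type} (le : P -> P -> Prop)
  (A : nat -> bool -> P -> Prop) : Prop :=
  (forall n i p q, A n i p -> le p q -> A n i q) /\
  (forall n p, A n true p -> A n false p -> False) /\
  (forall n p, exists q, le p q /\ (A n true q \/ A n false q)).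

(* p decides an initial segment of the name r which lies in a basic open
   subset of D; "forces r ∈ D*" (for D open) iff such p are dense. *)
Definition forces_in {P : Type} (le : P -> P -> Prop)
  (A : nat -> bool -> P -> Prop) (D : (nat -> bool) -> Prop) : Prop :=
  forall p, exists q, le p q /\
    exists (x : nat -> bool) (m : nat),
      (forall y, agree x y m -> D y) /\ (forall k, k < m -> A k (x k) q).

Definition adds_cohen_real {P : Type} (le : P -> P -> Prop) : Prop :=
  exists A : nat -> bool -> P -> Prop,
    real_name le A /\
    forall D : (nat -> bool) -> Prop, is_open D -> is_dense D -> forces_in le A D.

From Stdlib Require Import Arith List Lia Cantor Classical ClassicalEpsilon.
Import ListNotations.

(* The forcing is Laver forcing along the ultrafilter U: a condition is a tree
   with a stem above which every node has U-many immediate successors.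
   Conditions with the same stem are compatible, so the forcing is
   sigma-centered, and two distinct successors of the stem give incompatible
   extensions because U is nonprincipal.  By the pure decision property every
   node t decides, by a pure extension, a real r_t, and for each n the reals
   r_(a::t) agree with r_t below n for U-many a.  Since U is nowhere dense, the
   tree can be pruned so that S = {r_t | t in the tree} is nowhere dense.
   Every initial segment of the generic real decided by an extension of the
   pruned condition is an initial segment of some r_t in S, so the real is
   never forced into the open dense exterior of S. *)

Fixpoint code (l : list nat) : nat :=
  match l with [] => 0 | a :: t => S (Cantor.to_nat (a, code t)) end.

Lemma code_cons_lt a t : code t < code (a :: t).
Proof. cbn [code]. pose proof (Cantor.to_nat_non_decreasing a (code t)). lia. Qed.

Lemma code_inj l1 l2 : code l1 = code l2 -> l1 = l2.
Proof.
  revert l2; induction l1 as [|a t IH]; intros [|b u] H; cbn [code] in H;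
    try discriminate; auto.
  apply Nat.succ_inj, (f_equal Cantor.of_nat) in H. rewrite !Cantor.cancel_of_to in H.
  injection H as -> H. f_equal. auto.
Qed.

Lemma app_cons_tail_inj {X} (e1 e2 : list X) a b t :
  e1 ++ a :: t = e2 ++ b :: t -> a = b.
Proof.
  intros H. change (a :: t) with ([a] ++ t) in H. change (b :: t) with ([b] ++ t) in H.
  rewrite !app_assoc in H. apply app_inv_tail, app_inj_tail in H. apply H.
Qed.

Lemma app_cons_neq {X} (e : list X) a t : e ++ a :: t <> t.
Proof. intros H. apply (f_equal (@length X)) in H. rewrite length_app in H. simpl in H. lia. Qed.

Lemma nth_map_seq (x : nat -> bool) n k : k < n -> nth k (map x (seq 0 n)) false = x k.
Proof.
  intros Hk. rewrite nth_indep with (d' := x 0) by (rewrite length_map, length_seq; lia).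
  rewrite map_nth, seq_nth by lia. reflexivity.
Qed.

Lemma agree_refl x n : agree x x n.
Proof. intros k _. reflexivity. Qed.

Lemma agree_sym x y n : agree x y n -> agree y x n.
Proof. intros H k Hk. symmetry. auto. Qed.

Lemma agree_trans x y z n : agree x y n -> agree y z n -> agree x z n.
Proof. intros H1 H2 k Hk. rewrite H1; auto. Qed.

Lemma agree_le x y m n : m <= n -> agree x y n -> agree x y m.
Proof. intros Hmn H k Hk. apply H. lia. Qed.

Lemma nowhere_dense_subset S T :
  nowhere_dense T -> (forall z, S z -> T z) -> nowhere_dense S.
Proof.
  intros HT HST x n. destruct (HT x n) as (y & m & Hnm & Hxy & Hy).
  exists y, m. split; [exact Hnm|split; [exact Hxy|]].
  intros z Hz HSz. exact (Hy z Hz (HST z HSz)).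
Qed.

Lemma nowhere_dense_union S T :
  nowhere_dense S -> nowhere_dense T -> nowhere_dense (fun z => S z \/ T z).
Proof.
  intros HS HT x n. destruct (HS x n) as (y1 & m1 & Hn1 & Hxy1 & Hy1).
  destruct (HT y1 m1) as (y2 & m2 & Hn2 & Hy12 & Hy2).
  exists y2, m2. split; [lia|split].
  - apply (agree_trans _ y1); [exact Hxy1|]. apply (agree_le _ _ _ m1); [lia|exact Hy12].
  - intros z Hz [H|H]; [|exact (Hy2 z Hz H)].
    apply (Hy1 z); [|exact H].
    apply (agree_trans _ y2); [exact Hy12|]. apply (agree_le _ _ _ m2); [lia|exact Hz].
Qed.

Lemma nowhere_dense_singleton c : nowhere_dense (eq c).
Proof.
  intros x n. exists (fun i => if i <? n then x i else negb (c i)), (S n).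
  split; [lia|split].
  - intros k Hk. apply Nat.ltb_lt in Hk. rewrite Hk. reflexivity.
  - intros z Hz <-. specialize (Hz n (Nat.lt_succ_diag_r n)).
    cbv beta in Hz. rewrite Nat.ltb_irrefl in Hz. destruct (c n); discriminate.
Qed.

Lemma nowhere_dense_empty : nowhere_dense (fun _ => False).
Proof. apply (nowhere_dense_subset _ _ (nowhere_dense_singleton (fun _ => true))). tauto. Qed.

Lemma nowhere_dense_finite_union (V : nat -> (nat -> bool) -> Prop) n :
  (forall i, nowhere_dense (V i)) -> nowhere_dense (fun z => exists i, i <= n /\ V i z).
Proof.
  intros HV. induction n as [|n IH].
  - apply (nowhere_dense_subset _ _ (HV 0)).
    intros z (i & Hi & Hz). replace i with 0 in Hz by lia. exact Hz.
  - apply (nowhere_dense_subset _ _ (nowhere_dense_union _ _ IH (HV (S n)))).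
    intros z (i & Hi & Hz). destruct (Nat.eq_dec i (S n)) as [->|Hne]; [right; exact Hz|].
    left. exists i. split; [lia|exact Hz].
Qed.

Lemma bounded_on_short_lists (f : list bool -> nat) n :
  exists B, forall l, length l <= n -> f l <= B.
Proof.
  revert f. induction n as [|n IH]; intros f.
  - exists (f []). intros [|b l] H; simpl in H; [lia|lia].
  - destruct (IH (fun l => f (true :: l))) as [B1 H1].
    destruct (IH (fun l => f (false :: l))) as [B2 H2].
    exists (f [] + B1 + B2). intros [|[|] l] H; simpl in H.
    + lia.
    + specialize (H1 l ltac:(lia)). lia.
    + specialize (H2 l ltac:(lia)). lia.
Qed.

(* There are only finitely many basic open sets [x|n] for a fixed n, so the
   witnesses of nowhere density can be taken of bounded length. *)
Lemma nowhere_dense_uniform S n : nowhere_dense S ->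
  exists B, forall x, exists z m,
    n <= m <= B /\ agree x z n /\ forall w, agree z w m -> ~ S w.
Proof.
  intros HS.
  destruct (choice (fun (l : list bool) (r : (nat -> bool) * nat) =>
      n <= snd r /\ agree (fun i => nth i l false) (fst r) n /\
      forall w, agree (fst r) w (snd r) -> ~ S w)) as [wit Hwit].
  { intros l. destruct (HS (fun i => nth i l false) n) as (z & m & H). exists (z, m). exact H. }
  destruct (bounded_on_short_lists (fun l => snd (wit l)) n) as [B HB].
  exists B. intros x. set (l := map x (seq 0 n)).
  destruct (Hwit l) as (Hn & Hag & Hout).
  exists (fst (wit l)), (snd (wit l)). split; [|split; [|exact Hout]].
  - split; [exact Hn|]. apply HB. unfold l. rewrite length_map, length_seq. lia.
  - intros k Hk. rewrite <- (Hag k Hk). unfold l. rewrite nth_map_seq; auto.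
Qed.

Definition exterior (S : (nat -> bool) -> Prop) (z : nat -> bool) : Prop :=
  exists n, forall w, agree z w n -> ~ S w.

Lemma exterior_open S : is_open (exterior S).
Proof.
  intros z [n Hn]. exists n. intros w Hzw. exists n. intros w' Hww'.
  apply Hn, (agree_trans _ w); assumption.
Qed.

Lemma exterior_dense S : nowhere_dense S -> is_dense (exterior S).
Proof.
  intros HS x n. destruct (HS x n) as (y & m & _ & Hxy & Hy).
  exists y. split; [exact Hxy|]. exists m. exact Hy.
Qed.

(* [tree psi s t]: the node t lies in the tree with stem s in which every node
   u has the immediate successors a :: u with psi u a.  Nodes are reversed
   finite sequences, so extending a node means consing. *)
Inductive tree (psi : list nat -> nat -> Prop) (s : list nat) : list nat -> Prop :=
| tree_stem : tree psi s s
| tree_cons t a : tree psi s t -> psi t a -> tree psi s (a :: t).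

Lemma tree_trans psi s t u : tree psi s t -> tree psi t u -> tree psi s u.
Proof. intros Hst Htu. induction Htu; [exact Hst|]. apply tree_cons; auto. Qed.

Lemma tree_mono_on (psi psi' : list nat -> nat -> Prop) s t :
  tree psi s t -> (forall u b, tree psi s u -> psi u b -> psi' u b) -> tree psi' s t.
Proof. intros Ht Hsub. induction Ht; constructor; auto. Qed.

Lemma tree_mono (psi psi' : list nat -> nat -> Prop) s t :
  tree psi s t -> (forall u b, psi u b -> psi' u b) -> tree psi' s t.
Proof. intros Ht Hsub. apply (tree_mono_on psi); auto. Qed.

Lemma tree_suffix psi s t : tree psi s t -> exists e, t = e ++ s.
Proof.
  induction 1 as [|t a _ [e ->] _]; [exists []; reflexivity|]. exists (a :: e). reflexivity.
Qed.

Lemma tree_code_le psi s t : tree psi s t -> code s <= code t.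
Proof. induction 1 as [|t a _ IH _]; [lia|]. pose proof (code_cons_lt a t). lia. Qed.

Lemma tree_first_step psi s t : tree psi s t ->
  t = s \/ exists a, psi s a /\ tree psi (a :: s) t.
Proof.
  induction 1 as [|t a Ht IH Ha]; [left; reflexivity|right].
  destruct IH as [->|(b & Hb & Hbt)].
  - exists a. split; [exact Ha|constructor].
  - exists b. split; [exact Hb|]. apply tree_cons; assumption.
Qed.

Lemma tree_last_shallow psi n t : tree psi [] t ->
  exists v, tree psi v t /\
    (v = [] \/ exists a u, v = a :: u /\ psi u a /\ code u <= n) /\
    (v = t \/ n < code v).
Proof.
  induction 1 as [|t a Ht IH Ha].
  - exists []. split; [constructor|]. split; left; reflexivity.
  - destruct (le_lt_dec (code t) n) as [Hle|Hlt].
    + exists (a :: t). split; [constructor|]. split; [right; eauto|left; reflexivity].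
    + destruct IH as (v & Hvt & Hv & Hclose). exists v.
      split; [apply tree_cons; assumption|]. split; [exact Hv|right].
      destruct Hclose as [->|]; assumption.
Qed.

Lemma tree_agree psi (y : list nat -> nat -> bool) (K : nat -> nat) :
  (forall i j, i <= j -> K i <= K j) ->
  (forall t a, psi t a -> agree (y t) (y (a :: t)) (K (code t))) ->
  forall v t, tree psi v t -> agree (y v) (y t) (K (code v)).
Proof.
  intros HK Hstep v t Ht. induction Ht as [|t a Ht IH Ha]; [apply agree_refl|].
  apply (agree_trans _ (y t)); [exact IH|].
  apply (agree_le _ _ _ (K (code t))); [apply HK, (tree_code_le _ _ _ Ht)|auto].
Qed.

Fixpoint prefix_sum (B : nat -> nat) (n : nat) : nat :=
  match n with 0 => 0 | S n => prefix_sum B n + B n end.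

Lemma prefix_sum_mono B i j : i <= j -> prefix_sum B i <= prefix_sum B j.
Proof. induction 1; simpl; lia. Qed.

Lemma le_prefix_sum B n j : n < j -> B n <= prefix_sum B j.
Proof. intros Hnj. pose proof (prefix_sum_mono B (S n) j Hnj) as Hle. simpl in Hle. lia. Qed.

Section Pruning.

Variables (y : list nat -> nat -> bool) (succs : list nat -> nat -> Prop).

Definition shallow (n : nat) (v : list nat) : Prop :=
  v = [] \/ exists a u, v = a :: u /\ succs u a /\ code u <= n.

Definition shallow_image (n : nat) (z : nat -> bool) : Prop :=
  exists v, shallow n v /\ y v = z.

Hypothesis succs_image_nowhere_dense :
  forall t, nowhere_dense (fun z => exists a, succs t a /\ y (a :: t) = z).

Lemma shallow_image_nowhere_dense n : nowhere_dense (shallow_image n).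
Proof.
  set (level := fun i z => exists u a, code u = i /\ succs u a /\ y (a :: u) = z).
  assert (Hlevel : forall i, nowhere_dense (level i)).
  { intros i. destruct (classic (exists u, code u = i)) as [[u <-]|Hno].
    - apply (nowhere_dense_subset _ _ (succs_image_nowhere_dense u)).
      intros z (u' & a & Hu & Ha & Hz). apply code_inj in Hu. subst u'. eauto.
    - apply (nowhere_dense_subset _ _ nowhere_dense_empty).
      intros z (u & _ & Hu & _). apply Hno. eauto. }
  apply (nowhere_dense_subset _ _ (nowhere_dense_union _ _
    (nowhere_dense_singleton (y [])) (nowhere_dense_finite_union level n Hlevel))).
  intros z (v & [->|(a & u & -> & Ha & Hu)] & <-); [left; reflexivity|right].
  exists (code u). split; [exact Hu|]. exists u, a. auto.
Qed.

Variable B : nat -> nat.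

Hypothesis shallow_image_bound : forall n x, exists z m,
  n <= m <= B n /\ agree x z n /\ forall w, agree z w m -> ~ shallow_image n w.

Definition pruned_br (t : list nat) (a : nat) : Prop :=
  succs t a /\ agree (y t) (y (a :: t)) (prefix_sum B (code t)).

(* A node of the pruned tree is either shallow itself or agrees, far beyond
   the witness length B n, with a shallow ancestor of code above n. *)
Lemma pruned_image_nowhere_dense :
  nowhere_dense (fun z => exists t, tree pruned_br [] t /\ y t = z).
Proof.
  intros x n. destruct (shallow_image_bound n x) as (z & m & [Hnm HmB] & Hxz & Hz).
  exists z, m. split; [exact Hnm|split; [exact Hxz|]].
  intros w Hzw (t & Ht & <-).
  destruct (tree_last_shallow pruned_br n t Ht) as (v & Hvt & Hv & Hclose).
  apply (Hz (y v)).
  - apply (agree_trans _ (y t)); [exact Hzw|]. apply agree_sym.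
    destruct Hclose as [<-|Hlt]; [apply agree_refl|].
    apply (agree_le _ _ _ (prefix_sum B (code v))).
    + pose proof (le_prefix_sum B n (code v) Hlt). lia.
    + apply (tree_agree pruned_br y (prefix_sum B)); [apply prefix_sum_mono| |exact Hvt].
      intros ? ? [_ Hag]. exact Hag.
  - exists v. split; [|reflexivity].
    destruct Hv as [->|(a & u & -> & [Ha _] & Hu)]; [left; reflexivity|right; eauto].
Qed.

End Pruning.

Section LaverUltrafilter.

Variable U : (nat -> Prop) -> Prop.
Hypothesis HU : ultrafilter U.

Lemma uf_full : U (fun _ => True).
Proof. apply HU. Qed.

Lemma uf_mono (S T : nat -> Prop) : U S -> (forall n, S n -> T n) -> U T.
Proof. apply HU. Qed.

Lemma uf_inter (S T : nat -> Prop) : U S -> U T -> U (fun n => S n /\ T n).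
Proof. apply HU. Qed.

Lemma uf_compl (S : nat -> Prop) : U S \/ U (fun n => ~ S n).
Proof. apply HU. Qed.

Lemma uf_nonempty (S : nat -> Prop) : U S -> exists a, S a.
Proof.
  intros HS. apply NNPP. intros Hno. apply (proj1 (proj2 HU)).
  apply (uf_mono S); [exact HS|]. intros n Hn. apply Hno. eauto.
Qed.

Lemma uf_avoid : nonprincipal U -> forall a, U (fun b => b <> a).
Proof.
  intros Hnp a. destruct (uf_compl (fun b => b = a)) as [H|H]; [|exact H].
  destruct (Hnp a H).
Qed.

(* A condition stands for the tree [tree br stem]; [cond_le] compares the
   branchings on all nodes, which is stronger than inclusion of the trees. *)
Record cond := mkc {
  stem : list nat;
  br : list nat -> nat -> Prop;
  br_large : forall u, U (br u) }.

Definition cond_le (p q : cond) : Prop :=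
  tree (br p) (stem p) (stem q) /\ forall u a, br q u a -> br p u a.

Lemma cond_le_refl p : cond_le p p.
Proof. split; [constructor|auto]. Qed.

Lemma cond_le_trans p q r : cond_le p q -> cond_le q r -> cond_le p r.
Proof.
  intros [Hpq Hbq] [Hqr Hbr]. split; [|auto].
  apply (tree_trans _ _ (stem q)); [exact Hpq|]. apply (tree_mono (br q)); auto.
Qed.

Lemma cond_le_preorder : preorder cond_le.
Proof. split; [exact cond_le_refl|exact cond_le_trans]. Qed.

Definition top_cond : cond := mkc [] (fun _ _ => True) (fun _ => uf_full).

Definition succ_cond (p : cond) (a : nat) : cond := mkc (a :: stem p) (br p) (br_large p).

Lemma cond_le_succ p a : br p (stem p) a -> cond_le p (succ_cond p a).
Proof. intros Ha. split; [apply tree_cons; [constructor|exact Ha]|auto]. Qed.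

Definition meet_at (t : list nat) (p q : cond) : cond :=
  mkc t (fun u a => br p u a /\ br q u a) (fun u => uf_inter _ _ (br_large p u) (br_large q u)).

Lemma cond_le_meet_l t p q : tree (br p) (stem p) t -> cond_le p (meet_at t p q).
Proof. intros Ht. split; [exact Ht|]. simpl. tauto. Qed.

Lemma cond_le_meet_r t p q : tree (br q) (stem q) t -> cond_le q (meet_at t p q).
Proof. intros Ht. split; [exact Ht|]. simpl. tauto. Qed.

Lemma cond_sigma_centered : sigma_centered cond_le.
Proof.
  exists (fun n p => code (stem p) = n). split; [eauto|].
  intros n p q Hp Hq. rewrite <- Hq in Hp. apply code_inj in Hp.
  exists (meet_at (stem p) p q). split; [simpl; rewrite Hp; exact Hq|split].
  - apply cond_le_meet_l. constructor.
  - apply cond_le_meet_r. rewrite Hp. constructor.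
Qed.

Lemma cond_splitting : nonprincipal U -> splitting cond_le.
Proof.
  intros Hnp p.
  destruct (uf_nonempty _ (br_large p (stem p))) as [a Ha].
  destruct (uf_nonempty _ (uf_inter _ _ (br_large p (stem p)) (uf_avoid Hnp a)))
    as [b [Hb Hba]].
  exists (succ_cond p a), (succ_cond p b).
  split; [apply cond_le_succ, Ha|split; [apply cond_le_succ, Hb|]].
  intros (w & [Hw1 _] & [Hw2 _]). simpl in Hw1, Hw2.
  destruct (tree_suffix _ _ _ Hw1) as [e1 He1]. destruct (tree_suffix _ _ _ Hw2) as [e2 He2].
  rewrite He1 in He2. apply Hba. symmetry. exact (app_cons_tail_inj _ _ _ _ _ He2).
Qed.

Definition amalgam_br (t : list nat) (H : nat -> Prop) (Q : nat -> cond)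
  (u : list nat) (b : nat) : Prop :=
  (u = t -> H b) /\ (forall a e, H a -> u = e ++ a :: t -> br (Q a) u b).

Lemma amalgam_br_large t H Q : U H -> forall u, U (amalgam_br t H Q u).
Proof.
  intros HH u. destruct (classic (u = t)) as [->|Hne].
  - apply (uf_mono _ _ HH). intros b Hb. split; [auto|].
    intros a e _ He. exfalso. exact (app_cons_neq e a t (eq_sym He)).
  - destruct (classic (exists a e, H a /\ u = e ++ a :: t)) as [(a0 & e0 & _ & ->)|Hno].
    + apply (uf_mono _ _ (br_large (Q a0) (e0 ++ a0 :: t))). intros b Hb.
      split; [intros Heq; contradiction|].
      intros a e _ He. rewrite <- (app_cons_tail_inj _ _ _ _ _ He). exact Hb.
    + apply (uf_mono _ _ uf_full). intros b _. split; [intros Heq; contradiction|].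
      intros a e Ha He. exfalso. eauto.
Qed.

Lemma amalgamate (P : cond -> Prop) t (H : nat -> Prop) :
  U H -> (forall a, H a -> exists q, stem q = a :: t /\ P q) ->
  exists p, stem p = t /\
    forall q', cond_le p q' -> exists q q1, P q /\ cond_le q' q1 /\ cond_le q q1.
Proof.
  intros HH HP.
  destruct (choice (fun a q => H a -> stem q = a :: t /\ P q)) as [Q HQ].
  { intros a. destruct (classic (H a)) as [Ha|Ha].
    - destruct (HP a Ha) as [q Hq]. exists q. auto.
    - exists top_cond. contradiction. }
  exists (mkc t (amalgam_br t H Q) (amalgam_br_large t H Q HH)). split; [reflexivity|].
  intros q' [Hext Hsub]. simpl in Hext, Hsub.
  destruct (tree_first_step _ _ _ Hext) as [Heq|(a & [Ha _] & Hext')].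
  - destruct (uf_nonempty _ (br_large q' t)) as [a Ha].
    assert (HHa : H a) by exact (proj1 (Hsub t a Ha) eq_refl).
    destruct (HQ a HHa) as [Hs HPa].
    exists (Q a), (meet_at (a :: t) q' (Q a)). split; [exact HPa|split].
    + apply cond_le_meet_l. rewrite Heq. apply tree_cons; [constructor|exact Ha].
    + apply cond_le_meet_r. rewrite Hs. constructor.
  - specialize (Ha eq_refl). destruct (HQ a Ha) as [Hs HPa].
    exists (Q a), (meet_at (stem q') q' (Q a)). split; [exact HPa|split].
    + apply cond_le_meet_l. constructor.
    + apply cond_le_meet_r. rewrite Hs. apply (tree_mono_on _ _ _ _ Hext').
      intros u b Hu Hb. destruct (tree_suffix _ _ _ Hu) as [e ->].
      exact (proj2 Hb a e Ha eq_refl).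
Qed.

Section PureDecision.

Variable A : nat -> bool -> cond -> Prop.
Hypothesis HA : real_name cond_le A.

Definition forces (q : cond) (k : nat) (i : bool) : Prop :=
  forall q', cond_le q q' -> exists q'', cond_le q' q'' /\ A k i q''.

Definition purely_decides (t : list nat) (k : nat) (i : bool) : Prop :=
  exists q, stem q = t /\ forces q k i.

Lemma forces_mono q q' k i : forces q k i -> cond_le q q' -> forces q' k i.
Proof. intros Hq Hqq' q'' Hq''. apply Hq. eapply cond_le_trans; eauto. Qed.

Lemma forces_of_name q k i : A k i q -> forces q k i.
Proof.
  intros Hq q' Hqq'. exists q'. split; [apply cond_le_refl|]. exact (proj1 HA _ _ _ _ Hq Hqq').
Qed.

Lemma forces_contradictory q k : forces q k true -> forces q k false -> False.
Proof.
  intros H1 H2. destruct (H1 q (cond_le_refl q)) as (q1 & Hq1 & A1).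
  destruct (H2 q1 Hq1) as (q2 & Hq2 & A2).
  destruct HA as (Hup & Hdisj & _). exact (Hdisj k q2 (Hup _ _ _ _ A1 Hq2) A2).
Qed.

Lemma purely_decides_unique t k i1 i2 :
  purely_decides t k i1 -> purely_decides t k i2 -> i1 = i2.
Proof.
  intros (q1 & Hs1 & H1) (q2 & Hs2 & H2).
  assert (F1 : forces (meet_at t q1 q2) k i1).
  { apply (forces_mono q1); [exact H1|]. apply cond_le_meet_l. rewrite Hs1. constructor. }
  assert (F2 : forces (meet_at t q1 q2) k i2).
  { apply (forces_mono q2); [exact H2|]. apply cond_le_meet_r. rewrite Hs2. constructor. }
  destruct i1, i2; try reflexivity; exfalso; eapply forces_contradictory; eauto.
Qed.

Lemma purely_decides_of_successors t k i :
  U (fun a => purely_decides (a :: t) k i) -> purely_decides t k i.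
Proof.
  intros HH. destruct (amalgamate (fun q => forces q k i) t _ HH) as (p & Hp & Hamalg).
  { intros a Ha. exact Ha. }
  exists p. split; [exact Hp|]. intros q' Hq'.
  destruct (Hamalg q' Hq') as (q & q1 & Hf & H1 & H2).
  destruct (Hf q1 H2) as (q'' & H3 & HA'').
  exists q''. split; [eapply cond_le_trans; eauto|exact HA''].
Qed.

Lemma decided_of_successors t k :
  U (fun a => exists i, purely_decides (a :: t) k i) -> exists i, purely_decides t k i.
Proof.
  intros Hdec. destruct (uf_compl (fun a => purely_decides (a :: t) k true)) as [H|H].
  - exists true. apply purely_decides_of_successors, H.
  - exists false. apply purely_decides_of_successors.
    apply (uf_mono _ _ (uf_inter _ _ Hdec H)).
    intros a [[[|] Hi] Hn]; [contradiction|exact Hi].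
Qed.

(* Above an undecided node, U-many successors stay undecided; the tree of
   undecided nodes is a condition, yet some extension of it decides r(k). *)
Lemma pure_decision t k : exists i, purely_decides t k i.
Proof.
  apply NNPP. intros Hund.
  set (psi := fun u a => ~ (exists i, purely_decides u k i) ->
                         ~ (exists i, purely_decides (a :: u) k i)).
  assert (Hpsi : forall u, U (psi u)).
  { intros u. destruct (classic (exists i, purely_decides u k i)) as [Hu|Hu].
    - apply (uf_mono _ _ uf_full). intros a _ Hn. contradiction.
    - destruct (uf_compl (fun a => exists i, purely_decides (a :: u) k i)) as [H|H].
      + exfalso. exact (Hu (decided_of_successors u k H)).
      + apply (uf_mono _ _ H). intros a Ha _. exact Ha. }
  destruct (proj2 (proj2 HA) k (mkc t psi Hpsi)) as (q & [Hq _] & Hqi). simpl in Hq.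
  assert (Hundecided : forall u, tree psi t u -> ~ exists i, purely_decides u k i).
  { induction 1; auto. }
  apply (Hundecided _ Hq).
  destruct Hqi as [Hqi|Hqi]; eexists; exists q; (split; [reflexivity|]);
    apply forces_of_name; exact Hqi.
Qed.

Definition decided_real (t : list nat) (k : nat) : bool :=
  if excluded_middle_informative (purely_decides t k true) then true else false.

Lemma purely_decides_decided_real t k : purely_decides t k (decided_real t k).
Proof.
  unfold decided_real. destruct (excluded_middle_informative _) as [H|H]; [exact H|].
  destruct (pure_decision t k) as [[|] Hi]; [contradiction|exact Hi].
Qed.

Lemma decided_real_stem q k i : A k i q -> decided_real (stem q) k = i.
Proof.
  intros Hq. apply (purely_decides_unique (stem q) k); [apply purely_decides_decided_real|].
  exists q. split; [reflexivity|]. apply forces_of_name, Hq.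
Qed.

Lemma decided_real_successors t n :
  U (fun a => agree (decided_real t) (decided_real (a :: t)) n).
Proof.
  induction n as [|n IH].
  - apply (uf_mono _ _ uf_full). intros a _ k Hk. lia.
  - destruct (purely_decides_decided_real t n) as (q & <- & Hf).
    apply (uf_mono _ _ (uf_inter _ _ IH (br_large q (stem q)))).
    intros a [Hag Ha] k Hk. destruct (Nat.eq_dec k n) as [->|Hne]; [|apply Hag; lia].
    apply (purely_decides_unique (a :: stem q) n); [|apply purely_decides_decided_real].
    exists (succ_cond q a). split; [reflexivity|].
    apply (forces_mono q); [exact Hf|]. apply cond_le_succ, Ha.
Qed.

End PureDecision.

Lemma prune_to_nowhere_dense (y : list nat -> nat -> bool) :
  nowhere_dense_filter U ->
  (forall t n, U (fun a => agree (y t) (y (a :: t)) n)) ->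
  exists psi, (forall u, U (psi u)) /\
    nowhere_dense (fun z => exists t, tree psi [] t /\ y t = z).
Proof.
  intros Hnd Hy.
  destruct (choice (fun t S => U S /\ nowhere_dense (fun z => exists a, S a /\ y (a :: t) = z))
    (fun t => Hnd (fun a => y (a :: t)))) as [succs Hsuccs].
  destruct (choice (fun n b => forall x, exists z m, n <= m <= b /\ agree x z n /\
      forall w, agree z w m -> ~ shallow_image y succs n w)) as [B HB].
  { intros n. apply nowhere_dense_uniform, shallow_image_nowhere_dense.
    intros t. apply Hsuccs. }
  exists (pruned_br y succs B). split.
  - intros u. apply uf_inter; [apply Hsuccs|apply Hy].
  - exact (pruned_image_nowhere_dense y succs B HB).
Qed.

Lemma cond_no_cohen_real : nowhere_dense_filter U -> ~ adds_cohen_real cond_le.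
Proof.
  intros Hnd (A & HA & Hcohen).
  destruct (prune_to_nowhere_dense (decided_real A) Hnd (decided_real_successors A HA))
    as (psi & Hpsi & Hnwd).
  destruct (Hcohen _ (exterior_open _) (exterior_dense _ Hnwd) (mkc [] psi Hpsi))
    as (q & [Hq _] & x & m & Hsub & Hx).
  assert (Hag : agree x (decided_real A (stem q)) m).
  { intros k Hk. symmetry. apply (decided_real_stem A HA), Hx, Hk. }
  destruct (Hsub _ Hag) as [n Hn].
  apply (Hn _ (agree_refl _ n)). exists (stem q). split; [exact Hq|reflexivity].
Qed.

End LaverUltrafilter.

Theorem theorem3 :
  (exists U : (nat -> Prop) -> Prop,
      ultrafilter U /\ nonprincipal U /\ nowhere_dense_filter U) ->
  exists (P : Type) (le : P -> P -> Prop),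
    inhabited P /\ preorder le /\ sigma_centered le /\ splitting le /\
    ~ adds_cohen_real le.
Proof.
  intros (U & HU & Hnp & Hnd).
  exists (cond U), (cond_le U).
  split; [exact (inhabits (top_cond U HU))|].
  split; [exact (cond_le_preorder U)|].
  split; [exact (cond_sigma_centered U HU)|].
  split; [exact (cond_splitting U HU Hnp)|].
  exact (cond_no_cohen_real U HU Hnd).
Qed.
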